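(* Let $\langle A,f,g\rangle$ be a PS-algebra satisfying (ABT2$^{\mathrm s}$): for all $a,b\in A$, if $b\neq0$ then $a\leq f(a,b)$. Then it satisfies (ABT0): $x\leq f(x,x)$ for all $x$, and (ABT2): $y\cdot f(x,z)\leq f(x\cdot f(x,y),z)$ for all $x,y,z$. Consequently every strong betweenness algebra is a betweenness algebra.
   Context: A PS-algebra is $\langle A,f,g\rangle$ where $A$ is a Boolean algebra with at least two elements (operations $+,\cdot,-,0,1$) and $f,g\colon A^2\to A$ satisfy: $f(x,y)=0$ whenever $x=0$ or $y=0$; $f$ is additive in each argument; $g(x,y)=1$ whenever $x=0$ or $y=0$; $g$ is co-additive in each argument ($g(x+x',y)=g(x,y)\cdot g(x',y)$, $g(x,y+y')=g(x,y)\cdot g(x,y')$). A betweenness algebra is a PS-algebra satisfying for all $x,y,z$: (ABT0) $x\leq f(x,x)$; (ABT1$_f$) $f(x,y)\leq f(y,x)$; (ABT1$_g$) $g(x,y)\leq g(y,x)$; (ABT2) $y\cdot f(x,z)\leq f(x\cdot f(x,y),z)$; (ABT3) $f(x,g(x,-y)\cdot y)\leq y$; (wMIA) $x\neq0$, $y\neq0\Rightarrow g(x,y)\leq f(x,y)$. A strong betweenness algebra is a PS-algebra satisfying (ABT1$_f$), (ABT1$_g$), (ABT3), (wMIA) and (ABT2$^{\mathrm s}$). *)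

(* a Boolean algebra is a complemented distributive lattice
   with top and bottom ([ctbDistrLatticeType]); + is join, . is meet,
   - is complement, 0 is \bot, 1 is \top. *)
From mathcomp Require Import all_boot all_order.
Set Implicit Arguments. Unset Strict Implicit. Unset Printing Implicit Defensive.
Import Order.Theory.
Local Open Scope order_scope.

Section PS.
Context {disp : Order.disp_t} {T : ctbDistrLatticeType disp}.
Implicit Types (f g : T -> T -> T).

Definition PS_algebra f g : Prop :=
  (\bot : T) != \top /\
  (forall x y, x = \bot \/ y = \bot -> f x y = \bot) /\
  (forall x x' y, f (x `|` x') y = f x y `|` f x' y) /\
  (forall x y y', f x (y `|` y') = f x y `|` f x y') /\
  (forall x y, x = \bot \/ y = \bot -> g x y = \top) /\
  (forall x x' y, g (x `|` x') y = g x y `&` g x' y) /\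
  (forall x y y', g x (y `|` y') = g x y `&` g x y').

Definition ABT0 f : Prop := forall x, x <= f x x.
Definition ABT1f f : Prop := forall x y, f x y <= f y x.
Definition ABT1g g : Prop := forall x y, g x y <= g y x.
Definition ABT2 f : Prop := forall x y z, y `&` f x z <= f (x `&` f x y) z.
Definition ABT3 f g : Prop := forall x y, f x (g x (~` y) `&` y) <= y.
Definition wMIA f g : Prop :=
  forall x y, x != \bot -> y != \bot -> g x y <= f x y.
Definition ABT2s f : Prop := forall a b, b != \bot -> a <= f a b.

Definition betweenness_algebra f g : Prop :=
  PS_algebra f g /\ ABT0 f /\ ABT1f f /\ ABT1g g /\ ABT2 f /\ ABT3 f g /\ wMIA f g.

Definition strong_betweenness_algebra f g : Prop :=
  PS_algebra f g /\ ABT1f f /\ ABT1g g /\ ABT3 f g /\ wMIA f g /\ ABT2s f.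
End PS.

From mathcomp Require Import all_boot all_order.
Import Order.Theory.
Local Open Scope order_scope.

(* If [y != 0] then (ABT2^s) gives [x <= f x y], so [x `&` f x y = x] and
   (ABT2) reduces to [y `&` f x z <= f x z]; the case [y = 0] is trivial.
   Neither implication uses the PS-algebra axioms. *)

Section StrongBetweenness.
Context {disp : Order.disp_t} {T : ctbDistrLatticeType disp}.
Variable f : T -> T -> T.
Hypothesis ABT2s_f : ABT2s f.

Lemma ABT2s_ABT0 : ABT0 f.
Proof.
move=> x; have [->|x_neq0] := eqVneq x \bot; first exact: le0x.
exact: ABT2s_f.
Qed.

Lemma ABT2s_ABT2 : ABT2 f.
Proof.
move=> x y z; have [->|y_neq0] := eqVneq y \bot; first by rewrite meet0x le0x.
by rewrite (meet_idPl (ABT2s_f x y y_neq0)) leIr.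
Qed.

End StrongBetweenness.

Theorem proposition27 (disp : Order.disp_t) (T : ctbDistrLatticeType disp)
    (f g : T -> T -> T) :
  (PS_algebra f g -> ABT2s f -> ABT0 f /\ ABT2 f) /\
  (strong_betweenness_algebra f g -> betweenness_algebra f g).
Proof.
have ABT2s_ABT0_ABT2 : ABT2s f -> ABT0 f /\ ABT2 f.
  by move=> f2s; split; [exact: ABT2s_ABT0 | exact: ABT2s_ABT2].
split=> [_ //|[PS [f1 [g1 [fg3 [fgMIA /ABT2s_ABT0_ABT2[f0 f2]]]]]]].
by split=> //; do 5!split.
Qed.
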